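(* Let $F:\mathbb{R}^p\to\mathbb{R}^p$ be single-valued and $T:\mathbb{R}^p\rightrightarrows\mathbb{R}^p$, $\Phi:=F+T$, with $\mathrm{zer}\,\Phi\neq\emptyset$. Assume $T$ is maximally monotone, $F$ is $L$-Lipschitz continuous, and $\langle Fx-Fx^\star,x-x^\star\rangle\ge0$ for all $x\in\mathrm{dom}\,F$ for some $x^\star\in\mathrm{zer}\,\Phi$. Let $\eta>0$ and let $\{(x^k,y^k)\}$ be generated by the reflected forward-backward splitting scheme: start from $x^0\in\mathrm{dom}\,\Phi$, set $x^{-1}:=x^0$, and for $k\ge0$ $$y^k:=2x^k-x^{k-1},\qquad x^{k+1}:=J_{\eta T}(x^k-\eta Fy^k).$$ Define $$\mathcal{V}_k:=\|x^k-x^\star\|^2+2\|x^k-x^{k-1}\|^2+(1-\sqrt2L\eta)\|x^k-y^{k-1}\|^2+2\eta\langle Fy^{k-1}-Fx^\star,x^k-x^{k-1}\rangle.$$ Then for every $k\ge1$, $$\mathcal{V}_k\ge\mathcal{V}_{k+1}+\big[1-(1+\sqrt2)L\eta\big]\big[\|y^k-x^k\|^2+\|x^k-y^{k-1}\|^2\big],$$ $$\mathcal{V}_k\ge(1-L\eta)\|x^k-x^\star\|^2+\big(1-(1+\sqrt2)L\eta\big)\|x^k-y^{k-1}\|^2+2(1-L\eta)\|x^k-x^{k-1}\|^2.$$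
   Context: $J_{\eta T}:=(\mathbb{I}+\eta T)^{-1}$ is the resolvent of $\eta T$. $\mathrm{zer}\,\Phi:=\{x:0\in Fx+Tx\}$. $F$ is $L$-Lipschitz if $\|Fx-Fy\|\le L\|x-y\|$. The range $k\ge1$ is where all quantities in $\mathcal{V}_k$ are defined by the scheme. *)

From HB Require Import structures.
From mathcomp Require Import all_boot all_order all_algebra.
From mathcomp Require Import reals.
Set Implicit Arguments. Unset Strict Implicit. Unset Printing Implicit Defensive.
Import Order.TTheory GRing.Theory Num.Theory.
Local Open Scope ring_scope.

(* R^p is modelled as row vectors 'rV[R]_p with the Euclidean inner product. *)
Definition dotv (R : realType) (p : nat) (u v : 'rV[R]_p) : R :=
  \sum_(i < p) u ord0 i * v ord0 i.
Definition normv (R : realType) (p : nat) (u : 'rV[R]_p) : R :=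
  Num.sqrt (dotv u u).

(* Set-valued operators T : R^p ==> R^p as graphs: T x u  means  u \in T x. *)
Definition setop (R : realType) (p : nat) := 'rV[R]_p -> 'rV[R]_p -> Prop.

Definition monotone_op (R : realType) (p : nat) (T : setop R p) : Prop :=
  forall x u y v, T x u -> T y v -> 0 <= dotv (u - v) (x - y).

Definition maximally_monotone (R : realType) (p : nat) (T : setop R p) : Prop :=
  monotone_op T /\
  forall S : setop R p, monotone_op S -> (forall x u, T x u -> S x u) ->
    forall x u, S x u -> T x u.

Definition lipschitz (R : realType) (p : nat) (F : 'rV[R]_p -> 'rV[R]_p) (L : R) :=
  forall x y, normv (F x - F y) <= L * normv (x - y).

Definition zer (R : realType) (p : nat) (F : 'rV[R]_p -> 'rV[R]_p) (T : setop R p)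
  (x : 'rV[R]_p) : Prop := T x (- F x).

(* dom (F + T) = dom T, since F is single-valued and everywhere defined *)
Definition dom (R : realType) (p : nat) (T : setop R p) (x : 'rV[R]_p) : Prop :=
  exists u, T x u.

(* x = J_{eta T} z, i.e. z \in x + eta T x, i.e. eta^-1 (z - x) \in T x *)
Definition is_resolvent (R : realType) (p : nat) (eta : R) (T : setop R p)
  (z x : 'rV[R]_p) : Prop := T x (eta^-1 *: (z - x)).

(* x^{k-1}, with the convention x^{-1} := x^0 *)
Definition xprev (R : realType) (p : nat) (x : nat -> 'rV[R]_p) (k : nat) : 'rV[R]_p :=
  if k is k'.+1 then x k' else x 0%N.

Definition yseq (R : realType) (p : nat) (x : nat -> 'rV[R]_p) (k : nat) : 'rV[R]_p :=
  2%:R *: x k - xprev x k.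

(* V_k (meaningful for k >= 1) *)
Definition Vk (R : realType) (p : nat) (F : 'rV[R]_p -> 'rV[R]_p) (L eta : R)
  (x : nat -> 'rV[R]_p) (xs : 'rV[R]_p) (k : nat) : R :=
  normv (x k - xs) ^+ 2 + 2%:R * normv (x k - x k.-1) ^+ 2
  + (1 - Num.sqrt 2%:R * L * eta) * normv (x k - yseq x k.-1) ^+ 2
  + 2%:R * eta * dotv (F (yseq x k.-1) - F xs) (x k - x k.-1).

From HB Require Import structures.
From mathcomp Require Import all_boot all_order all_algebra.
From mathcomp Require Import reals.
From mathcomp Require Import ring lra.
Set Implicit Arguments. Unset Strict Implicit. Unset Printing Implicit Defensive.
Import Order.TTheory GRing.Theory Num.Theory.
Local Open Scope ring_scope.

(* The monotonicity of T between (x^{k+1}, x⋆) and between (x^{k+1}, x^k),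
   read through the resolvent, and that of F between y^k and x⋆, add up to an
   exact identity which bounds V_{k+1} by V_k up to the cross term
   2 eta <F y^k - F y^{k-1}, x^{k+1} - y^k>.  That term, and the term
   2 eta <F y^{k-1} - F x⋆, x^k - x^{k-1}> of V_k itself, are controlled by
   Cauchy-Schwarz, the Lipschitz bound and the weighted Young inequality
   2 s t <= c s^2 + c^-1 t^2.  Using c = sqrt 2 on the cross term and c = 1 + sqrt 2
   to split y^k - y^{k-1} = (x^k - x^{k-1}) + (x^k - y^{k-1}) produces the
   constant 1 + sqrt 2.  A negative L is only possible on the zero space, where
   both inequalities are trivial. *)

Lemma young_ineq (R : realFieldType) (c c' s t : R) : 0 < c -> c * c' = 1 ->
  2 * s * t <= c * s ^+ 2 + c' * t ^+ 2.
Proof.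
move=> c_gt0 cc'1; have c'_gt0 : 0 < c' by rewrite -(pmulr_rgt0 _ c_gt0) cc'1.
have := mulr_ge0 (ltW c'_gt0) (sqr_ge0 (c * s - t)).
have -> : c' * (c * s - t) ^+ 2
  = (c * c') * (c * s ^+ 2) - 2 * (c * c') * s * t + c' * t ^+ 2 by ring.
rewrite cc'1; lra.
Qed.

Section InnerProduct.
Variables (R : realType) (p : nat).
Implicit Types u v w : 'rV[R]_p.

Lemma dotv_ge0 u : 0 <= dotv u u.
Proof. by apply: sumr_ge0 => i _; rewrite -expr2 sqr_ge0. Qed.

Lemma dotv0l v : dotv 0 v = 0.
Proof. by rewrite /dotv big1 // => i _; rewrite mxE mul0r. Qed.

Lemma dotvNl u v : dotv (- u) v = - dotv u v.
Proof. by rewrite /dotv -sumrN; apply: eq_bigr => i _; rewrite mxE mulNr. Qed.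

Lemma dotvZl a u v : dotv (a *: u) v = a * dotv u v.
Proof. by rewrite /dotv mulr_sumr; apply: eq_bigr => i _; rewrite mxE mulrA. Qed.

Lemma dotv_eq0 u : (dotv u u == 0) = (u == 0).
Proof.
apply/idP/eqP => [|->]; last by rewrite dotv0l.
rewrite /dotv psumr_eq0 => [/allP u0|i _]; last by rewrite -expr2 sqr_ge0.
apply/rowP => j; rewrite mxE.
by have /(_ (mem_index_enum j)) := u0 j; rewrite mulf_eq0 orbb => /eqP.
Qed.

Lemma normv_ge0 u : 0 <= normv u.
Proof. exact: sqrtr_ge0. Qed.

Lemma normv_sq u : normv u ^+ 2 = dotv u u.
Proof. by rewrite sqr_sqrtr ?dotv_ge0. Qed.

Lemma normv_eq0 u : (normv u == 0) = (u == 0).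
Proof. by rewrite sqrtr_eq0 le_eqVlt ltNge dotv_ge0 orbF dotv_eq0. Qed.

Lemma normvN u : normv (- u) = normv u.
Proof.
rewrite /normv dotvNl /dotv -sumrN; congr Num.sqrt.
by apply: eq_bigr => i _; rewrite mxE mulrN opprK.
Qed.

Lemma normv_subC u v : normv (u - v) = normv (v - u).
Proof. by rewrite -opprB normvN. Qed.

Lemma normv_lincomb_sq a b u v :
  normv (a *: u + b *: v) ^+ 2
  = a ^+ 2 * normv u ^+ 2 + 2 * a * b * dotv u v + b ^+ 2 * normv v ^+ 2.
Proof.
rewrite !normv_sq /dotv !mulr_sumr -!big_split /=.
by apply: eq_bigr => i _; rewrite !mxE; ring.
Qed.

Lemma dotv_le_normv u v : dotv u v <= normv u * normv v.
Proof.
have [->|u_neq0] := eqVneq u 0; first by rewrite dotv0l mulr_ge0 ?normv_ge0.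
have [->|v_neq0] := eqVneq v 0.
  by rewrite /dotv big1 ?mulr_ge0 ?normv_ge0 // => i _; rewrite mxE mulr0.
have uv_gt0 : 0 < normv u * normv v.
  by rewrite mulr_gt0 // lt0r normv_ge0 normv_eq0 ?u_neq0 ?v_neq0.
have := sqr_ge0 (normv (normv v *: u + (- normv u) *: v)).
rewrite normv_lincomb_sq => h.
have : 0 <= (normv u * normv v) * (normv u * normv v - dotv u v) by lra.
by rewrite pmulr_rge0 // subr_ge0.
Qed.

Lemma normv_sub_sq_le c c' u v w : 0 < c -> c * c' = 1 ->
  normv (u - w) ^+ 2 <= (1 + c) * normv (u - v) ^+ 2 + (1 + c') * normv (v - w) ^+ 2.
Proof.
move=> c_gt0 cc'1.
have -> : u - w = 1 *: (u - v) + 1 *: (v - w) by rewrite !scale1r addrA subrK.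
rewrite normv_lincomb_sq.
have := dotv_le_normv (u - v) (v - w).
have := young_ineq (normv (u - v)) (normv (v - w)) c_gt0 cc'1.
lra.
Qed.

End InnerProduct.

Lemma lipschitz_lt0_eq0 (R : realType) (p : nat) (F : 'rV[R]_p -> 'rV[R]_p) L :
  lipschitz F L -> L < 0 -> forall u : 'rV[R]_p, u = 0.
Proof.
move=> FL L_lt0 u; apply/eqP; rewrite -normv_eq0 eq_le normv_ge0 andbT.
have := le_trans (normv_ge0 _) (FL u 0); rewrite subr0.
by rewrite (nmulr_rge0 _ L_lt0).
Qed.

Lemma lipschitz_dotv_ge (R : realType) (p : nat) (F : 'rV[R]_p -> 'rV[R]_p) L c c' u v w :
  lipschitz F L -> 0 <= L -> 0 < c -> c * c' = 1 ->
  - (L * (c * normv w ^+ 2 + c' * normv (u - v) ^+ 2)) <= 2 * dotv (F u - F v) w.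
Proof.
move=> FL L_ge0 c_gt0 cc'1.
have cs := dotv_le_normv (F v - F u) w.
rewrite -opprB dotvNl normvN in cs.
have lip := ler_wpM2r (normv_ge0 w) (FL u v).
have young := ler_wpM2l L_ge0 (young_ineq (normv w) (normv (u - v)) c_gt0 cc'1).
lra.
Qed.

Lemma rfb_descent_identity (R : realType) (p : nat) (eta : R)
    (x0 x1 x2 xs g0 g1 gs : 'rV[R]_p) :
  normv (x1 - xs) ^+ 2 + normv (x1 - x0) ^+ 2 + 2 * eta * dotv (g0 - gs) (x1 - x0)
  - (normv (x2 - xs) ^+ 2 + 2 * normv (x2 - x1) ^+ 2
     + normv (x2 - (2%:R *: x1 - x0)) ^+ 2 + 2 * eta * dotv (g1 - gs) (x2 - x1)
     + 2 * eta * dotv (g1 - g0) (x2 - (2%:R *: x1 - x0)))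
  = 2 * dotv ((x1 - eta *: g1 - x2) - (xs - eta *: gs - xs)) (x2 - xs)
  + 2 * dotv ((x1 - eta *: g1 - x2) - (x0 - eta *: g0 - x1)) (x2 - x1)
  + 2 * eta * dotv (g1 - gs) (2%:R *: x1 - x0 - xs).
Proof.
rewrite !normv_sq /dotv !mulr_sumr !opprD -!sumrN -!big_split /=.
by apply: eq_bigr => i _; rewrite !mxE; ring.
Qed.

Section Resolvent.
Variables (R : realType) (p : nat) (T : setop R p) (eta : R).
Hypotheses (T_mono : monotone_op T) (eta_gt0 : 0 < eta).

Lemma resolvent_monotone z1 z2 x1 x2 :
  is_resolvent eta T z1 x1 -> is_resolvent eta T z2 x2 ->
  0 <= dotv ((z1 - x1) - (z2 - x2)) (x1 - x2).
Proof.
move=> /T_mono T12 /T12; rewrite -scalerBr dotvZl.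
by rewrite pmulr_rge0 // invr_gt0.
Qed.

Lemma zer_resolvent F xs : zer F T xs -> is_resolvent eta T (xs - eta *: F xs) xs.
Proof.
by rewrite /zer /is_resolvent addrAC subrr add0r scalerN scalerA mulVf ?gt_eqF ?scale1r.
Qed.

End Resolvent.

Section ReflectedForwardBackward.
Variables (R : realType) (p : nat) (F : 'rV[R]_p -> 'rV[R]_p) (T : setop R p).
Variables (L eta : R) (xs : 'rV[R]_p).
Hypotheses (T_mono : monotone_op T) (FL : lipschitz F L) (L_ge0 : 0 <= L).
Hypotheses (xs_zer : zer F T xs) (F_star : forall z, 0 <= dotv (F z - F xs) (z - xs)).
Hypothesis eta_gt0 : 0 < eta.

Lemma rfb_descent x0 x1 x2 y0 :
  is_resolvent eta T (x0 - eta *: F y0) x1 ->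
  is_resolvent eta T (x1 - eta *: F (2%:R *: x1 - x0)) x2 ->
  normv (x2 - xs) ^+ 2 + 2 * normv (x2 - x1) ^+ 2
    + normv (x2 - (2%:R *: x1 - x0)) ^+ 2
    + 2 * eta * dotv (F (2%:R *: x1 - x0) - F xs) (x2 - x1)
    + 2 * eta * dotv (F (2%:R *: x1 - x0) - F y0) (x2 - (2%:R *: x1 - x0))
  <= normv (x1 - xs) ^+ 2 + normv (x1 - x0) ^+ 2
    + 2 * eta * dotv (F y0 - F xs) (x1 - x0).
Proof.
move=> x1_step x2_step.
have xs_step := zer_resolvent eta_gt0 xs_zer.
have mono_xs := resolvent_monotone T_mono eta_gt0 x2_step xs_step.
have mono_x1 := resolvent_monotone T_mono eta_gt0 x2_step x1_step.
have star := mulr_ge0 (ltW eta_gt0) (F_star (2%:R *: x1 - x0)).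
have := rfb_descent_identity eta x0 x1 x2 xs (F y0) (F (2%:R *: x1 - x0)) (F xs).
lra.
Qed.

Lemma Vk_lower_bound x k :
  Vk F L eta x xs k >= (1 - L * eta) * normv (x k - xs) ^+ 2
    + (1 - (1 + Num.sqrt 2%:R) * L * eta) * normv (x k - yseq x k.-1) ^+ 2
    + 2%:R * (1 - L * eta) * normv (x k - x k.-1) ^+ 2.
Proof.
rewrite /Vk; set y0 := yseq x k.-1; set x1 := x k; set x0 := x k.-1.
have two_gt0 : (0 : R) < 2 := ltr0Sn _ 1.
have lip := lipschitz_dotv_ge y0 xs (x1 - x0) FL L_ge0 two_gt0
  (divff (lt0r_neq0 two_gt0)).
have tri := @normv_sub_sq_le _ _ 1 1 y0 x1 xs ltr01 (mulr1 1).
rewrite [normv (y0 - x1)]normv_subC in tri.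
have := ler_wpM2l (ltW eta_gt0) lip.
have := ler_wpM2l (mulr_ge0 (ltW eta_gt0) L_ge0) tri.
lra.
Qed.

Lemma Vk_decrease x k :
  is_resolvent eta T (x k - eta *: F (yseq x k)) (x k.+1) ->
  is_resolvent eta T (x k.+1 - eta *: F (yseq x k.+1)) (x k.+2) ->
  Vk F L eta x xs k.+1 >= Vk F L eta x xs k.+2
    + (1 - (1 + Num.sqrt 2%:R) * L * eta)
      * (normv (yseq x k.+1 - x k.+1) ^+ 2 + normv (x k.+1 - yseq x k) ^+ 2).
Proof.
move=> x1_step x2_step; have descent := rfb_descent x1_step x2_step.
rewrite /Vk /= [yseq x k.+1]/yseq /=.
set r := Num.sqrt 2%:R; set x0 := x k; set x1 := x k.+1; set x2 := x k.+2.
set y0 := yseq x k; set y1 := 2%:R *: x1 - x0.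
have r_gt0 : 0 < r by rewrite sqrtr_gt0 ltr0Sn.
have r_sq : r ^+ 2 = 2 by rewrite sqr_sqrtr ?ler0n.
have r_half : r * (r / 2) = 1 by rewrite mulrA -expr2 r_sq divff ?pnatr_eq0.
have lip := lipschitz_dotv_ge y1 y0 (x2 - y1) FL L_ge0 r_gt0 r_half.
have r_pred : (1 + r) * (r - 1) = 1.
  have -> : (1 + r) * (r - 1) = r ^+ 2 - 1 by ring.
  by rewrite r_sq; lra.
have tri := @normv_sub_sq_le _ _ _ _ y1 x1 y0 (addr_gt0 ltr01 r_gt0) r_pred.
have y1x1 : normv (y1 - x1) = normv (x1 - x0).
  by rewrite /y1 scaler_nat mulr2n addrAC addrK.
rewrite y1x1 in tri *.
have weights : r / 2 * normv (y1 - y0) ^+ 2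
    <= (1 + r) * normv (x1 - x0) ^+ 2 + normv (x1 - y0) ^+ 2.
  have := ler_wpM2l (divr_ge0 (ltW r_gt0) (ler0n _ 2)) tri.
  have -> : r / 2 * ((1 + (1 + r)) * normv (x1 - x0) ^+ 2
                      + (1 + (r - 1)) * normv (x1 - y0) ^+ 2)
    = r * normv (x1 - x0) ^+ 2
      + r * (r / 2) * (normv (x1 - x0) ^+ 2 + normv (x1 - y0) ^+ 2) by field.
  rewrite r_half; lra.
have := ler_wpM2l (ltW eta_gt0) lip.
have := ler_wpM2l (mulr_ge0 (ltW eta_gt0) L_ge0) weights.
lra.
Qed.

End ReflectedForwardBackward.

Theorem lemma7 (R : realType) (p : nat) (F : 'rV[R]_p -> 'rV[R]_p) (T : setop R p)
  (L eta : R) (xs : 'rV[R]_p) (x : nat -> 'rV[R]_p) :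
  maximally_monotone T ->
  lipschitz F L ->
  zer F T xs ->
  (forall z, 0 <= dotv (F z - F xs) (z - xs)) ->
  0 < eta ->
  dom T (x 0%N) ->
  (forall k, is_resolvent eta T (x k - eta *: F (yseq x k)) (x k.+1)) ->
  forall k, (1 <= k)%N ->
    Vk F L eta x xs k >= Vk F L eta x xs k.+1
      + (1 - (1 + Num.sqrt 2%:R) * L * eta)
        * (normv (yseq x k - x k) ^+ 2 + normv (x k - yseq x k.-1) ^+ 2)
    /\
    Vk F L eta x xs k >= (1 - L * eta) * normv (x k - xs) ^+ 2
      + (1 - (1 + Num.sqrt 2%:R) * L * eta) * normv (x k - yseq x k.-1) ^+ 2
      + 2%:R * (1 - L * eta) * normv (x k - x k.-1) ^+ 2.
Proof.
move=> [T_mono _] FL xs_zer F_star eta_gt0 _ step [//|k] _.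
have [L_lt0|L_ge0] := ltP L 0.
  have dotv0 (u v : 'rV[R]_p) : dotv u v = 0.
    by rewrite (lipschitz_lt0_eq0 FL L_lt0 u) dotv0l.
  by rewrite /Vk /normv !dotv0 sqrtr0; split; lra.
split; first exact: Vk_decrease (step k) (step k.+1).
exact: Vk_lower_bound.
Qed.
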